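(* Suppose Assumption A1 holds, and let $I=(\bar x,\bar x+\varepsilon)$ be an interval as in the conclusion of Theorem 2 (i.e. $\varepsilon>0$, $s$ is differentiable and strictly monotone on $I$, and for all $x\in I$, $|s'(x)|=f_{X\mid I}(x)/f_{s(X)\mid I}(s(x))$ with $f_{s(X)\mid I}(s(x))$ existing and nonzero). Let $\theta:=\operatorname{sgn}(s'(\bar x^+))$. Then the limit $f_{s(X)\mid I}(s(\bar x^+)):=\lim_{x\downarrow\bar x}f_{s(X)\mid I}(s(x))$ exists and is nonzero, and $$\mathrm{AME}^+_{\bar x}=m'(\bar x^+)-\theta\cdot\frac{f_{X\mid I}(\bar x^+)}{f_{s(X)\mid I}(s(\bar x^+))},$$ where $f_{X\mid I}(\bar x^+)=f_X(\bar x^+)/P(X\in I)$.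
   Context: Setting. Fix a probability space and a real number $\bar x$. For each real $x\ge\bar x$ there is a real random variable $Y(x)$; $X$ is a real random variable with $X\ge\bar x$ a.s. and $P(X=\bar x)>0$; $Y=Y(X)$. All random variables whose conditional expectations are taken are integrable; conditional expectations given $X=x$ denote fixed versions regarded as functions of $x$. Notation: for $g$ on a right neighbourhood of $\bar x$, $g(\bar x^+):=\lim_{x\downarrow\bar x}g(x)$, $g'(\bar x^+):=\lim_{x\downarrow\bar x}\frac{g(x)-g(\bar x^+)}{x-\bar x}$. For an event $S$ with $P(S)>0$, $f_{V\mid S}$ is the derivative of $v\mapsto P(V\le v\mid S)$ where it exists; $f_{X\mid I}(x)=f_X(x)/P(X\in I)$. $\operatorname{sgn}(v)=\mathbf 1(v\ge0)-\mathbf 1(v\le0)$. Definitions: $\mathrm{ATT}(x):=E[Y(x)-Y(\bar x)\mid X=x]$; $\mathrm{AME}^+_{\bar x}:=\lim_{x\downarrow\bar x}\frac{\mathrm{ATT}(x)}{x-\bar x}$; for $x>\bar x$, $m(x):=E[Y\mid X=x]-E[Y\mid X=\bar x^+]$, $s(x):=E[Y(\bar x)\mid X=x]-E[Y(\bar x)\mid X=\bar x^+]$. Assumption A1: (i) for some $\varepsilon_1>0$, $X$ has a density $f_X$ that exists and is continuous on $(\bar x,\bar x+\varepsilon_1)$, and $f_X(\bar x^+)$ exists and is strictly positive; (ii) $x\mapsto E[Y\mid X=x]$ is differentiable on $(\bar x,\bar x+\varepsilon_2)$ for some $\varepsilon_2>0$, and $E[Y\mid X=\bar x^+]$ and $\lim_{x\downarrow\bar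 x}\frac{d}{dx}E[Y\mid X=x]$ exist; (iii) $x\mapsto E[Y(\bar x)\mid X=x]$ is differentiable on $(\bar x,\bar x+\varepsilon_3)$ for some $\varepsilon_3>0$, and $\lim_{x\downarrow\bar x}\frac{d}{dx}E[Y(\bar x)\mid X=x]$ exists and is nonzero; (iv) $\mathrm{ATT}(\bar x^+)=0$ and $\mathrm{ATT}'(\bar x^+)$ exists. *)

From HB Require Import structures.
From mathcomp Require Import all_boot all_order all_algebra.
From mathcomp Require Import all_classical all_reals all_analysis.
Set Implicit Arguments. Unset Strict Implicit. Unset Printing Implicit Defensive.
Import Order.TTheory GRing.Theory Num.Theory.
Import numFieldNormedType.Exports.
Local Open Scope classical_set_scope.
Local Open Scope ring_scope.

Definition sgn {R : realType} (v : R) : R := ((0 <= v)%R)%:R - ((v <= 0)%R)%:R.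

(* right difference quotient (g(x) - g(a^+)) / (x - a); g'(a^+) is its limit at a^+ *)
Definition rquot {R : realType} (g : R -> R) (a : R) : R -> R :=
  fun x => (g x - lim (g z @[z --> a^'+])) / (x - a).

Definition cond_cdf d (T : measurableType d) (R : realType) (P : probability T R)
  (V : T -> R) (S : set T) (v : R) : R :=
  fine (P ([set w | V w <= v] `&` S)) / fine (P S).

Definition is_cond_exp_version d (T : measurableType d) (R : realType)
  (P : probability T R) (X : T -> R) (Z : T -> R) (phi : R -> R) : Prop :=
  measurable_fun setT phi /\
  forall B : set R, measurable B ->
    (\int[P]_(w in X @^-1` B) (Z w)%:E = \int[P]_(w in X @^-1` B) (phi (X w))%:E)%E.

(* A coherent choice of fixed versions CE Z x = E[Z | X = x] for integrable Z:
   each CE Z is a version; the chosen versions are linear, and E[Z | X = x]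
   only depends on the values of Z on the event {X = x}. *)
Definition fixed_cond_exp d (T : measurableType d) (R : realType)
  (P : probability T R) (X : T -> R) (CE : (T -> R) -> R -> R) : Prop :=
  (forall Z, P.-integrable setT (EFin \o Z) -> is_cond_exp_version P X Z (CE Z)) /\
  (forall Z1 Z2, P.-integrable setT (EFin \o Z1) -> P.-integrable setT (EFin \o Z2) ->
     forall x, CE (Z1 \- Z2) x = CE Z1 x - CE Z2 x) /\
  (forall Z1 Z2, P.-integrable setT (EFin \o Z1) -> P.-integrable setT (EFin \o Z2) ->
     forall x, (forall w, X w = x -> Z1 w = Z2 w) -> CE Z1 x = CE Z2 x).

(* For x > xbar the fixed conditional expectations are linear and only see
   {X = x}, where Y(x) = Y; hence ATT(x) = E[Y | X = x] - E[Y(xbar) | X = x]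
   and E[Y(xbar) | X = x] has the same right limit as E[Y | X = x].  So
   ATT(x) / (x - xbar) is the difference of the right difference quotients of
   m and s, whose limits are m'(xbar^+) and l := s'(xbar^+) by l'Hopital.
   The change-of-variables identity |s'| = f_{X|I} / f_{s(X)|I}(s) then shows
   f_{s(X)|I}(s(x)) -> f_{X|I}(xbar^+) / |l|, and sgn(l) |l| = l. *)

From HB Require Import structures.
From mathcomp Require Import all_boot all_order all_algebra.
From mathcomp Require Import all_classical all_reals all_analysis.
Import Order.TTheory GRing.Theory Num.Theory.
Import numFieldNormedType.Exports.
Local Open Scope classical_set_scope.
Local Open Scope ring_scope.

Lemma derive1_subr_cst {R : realType} {f : R -> R} {c : R} :
  derive1 (fun z => f z - c) = derive1 f.
Proof.
by apply/funext => x; rewrite /derive1; under eq_fun do rewrite opprB addrA subrK.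
Qed.

Lemma sgn_mul_norm {R : realType} (v : R) : sgn v * `|v| = v.
Proof.
rewrite /sgn; case: (ltgtP v 0) => [v0|v0|->]; last by rewrite normr0 mulr0.
- by rewrite ltr0_norm //= sub0r mulN1r opprK.
- by rewrite gtr0_norm //= subr0 mul1r.
Qed.

Lemma rquot_subr_lim {R : realType} {f : R -> R} {a : R} :
  cvg (f z @[z --> a^'+]) ->
  rquot (fun x => f x - lim (f z @[z --> a^'+])) a = rquot f a.
Proof.
move=> cf; apply/funext => x; rewrite /rquot [X in (_ - X) / _](_ : _ = 0) ?subr0 //.
apply: cvg_lim => //; rewrite -(subrr (lim (f z @[z --> a^'+]))).
exact: cvgB cf (cvg_cst _).
Qed.

Lemma cvg_rquot_derive1 {R : realType} {f : R -> R} {a e l : R} : 0 < e ->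
  (forall x, a < x < a + e -> derivable f x 1) -> cvg (f z @[z --> a^'+]) ->
  derive1 f z @[z --> a^'+] --> l -> rquot f a z @[z --> a^'+] --> l.
Proof.
move=> e0 df cf dfl; set c := lim (f z @[z --> a^'+]).
apply: (@lhopital_at_right R (f - cst c) (derive1 f)
   ((fun x : R => x) - cst a) (fun=> 1) a (a + e)); rewrite ?ltrDl //.
- move=> x; rewrite in_itv /= => /df fx.
  rewrite derive1E -[X in is_derive _ _ _ X]subr0.
  exact: is_deriveB (derivableP fx) (is_derive_cst _ _ _).
- move=> x _; rewrite -[X in is_derive _ _ _ X]subr0.
  exact: is_deriveB (is_derive_id _ _) (is_derive_cst _ _ _).
- by rewrite -(subrr c); exact: cvgB cf (cvg_cst _).
- rewrite -(subrr a); exact: cvgB (cvg_at_right_filter _) (cvg_cst _).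
- by under eq_fun do rewrite divr1.
Qed.

Lemma fixed_cond_exp_subr_on d (T : measurableType d) (R : realType)
    (P : probability T R) (X : T -> R) (CE : (T -> R) -> R -> R)
    (Z Z1 Z2 : T -> R) (x : R) :
  fixed_cond_exp P X CE ->
  P.-integrable setT (EFin \o Z) -> P.-integrable setT (EFin \o Z1) ->
  P.-integrable setT (EFin \o Z2) ->
  (forall w, X w = x -> Z w = Z1 w - Z2 w) -> CE Z x = CE Z1 x - CE Z2 x.
Proof.
move=> [_ [CE_sub CE_local]] iZ iZ1 iZ2 eqZ.
have iZ12 : P.-integrable setT (EFin \o (Z1 \- Z2)).
  have -> : EFin \o (Z1 \- Z2) = ((EFin \o Z1) \- (EFin \o Z2))%E by apply/funext.
  exact: integrableB.
by rewrite -CE_sub //; exact: CE_local.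
Qed.

Lemma eq_div_normr {R : numFieldType} (u a v : R) :
  u != 0 -> `|u| = a / v -> v = a / `|u|.
Proof.
move=> u0 ua; have a0 : a != 0.
  by apply: contra u0 => /eqP a0; rewrite -normr_eq0 ua a0 mul0r.
have v0 : v != 0 by apply: contra u0 => /eqP v0; rewrite -normr_eq0 ua v0 invr0 mulr0.
by rewrite ua divKf.
Qed.

Section norm_eq_div_limits.
Context {R : realType} {F : set_system R} {FF : ProperFilter F}.
Context {u a v : R -> R} {c l : R}.

Lemma near_norm_eq_div_neq0 : u @ F --> l -> l != 0 ->
  (\forall z \near F, `|u z| = a z / c / v z) -> c != 0.
Proof.
move=> ul l0 uav; apply/negP => /eqP c0.
have : \forall z \near F, False.
  near=> z; have uz : u z != 0 by near: z; exact: cvgr_neq0 ul l0.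
  have uaz : `|u z| = a z / c / v z by near: z.
  by move: uz; rewrite -normr_eq0 uaz c0 invr0 mulr0 mul0r eqxx.
exact: filter_not_empty.
Unshelve. all: by end_near.
Qed.

Lemma cvg_norm_eq_div (fl : R) : u @ F --> l -> l != 0 ->
  (\forall z \near F, `|u z| = a z / c / v z) ->
  a @ F --> fl -> v @ F --> fl / c / `|l|.
Proof.
move=> ul l0 uav afl.
have : a z / c / `|u z| @[z --> F] --> fl / c / `|l|.
  apply: cvgM; first exact: cvgM afl (cvg_cst _).
  by apply: cvgV; [rewrite normr_eq0 | exact: cvg_norm].
apply: cvg_trans; apply: near_eq_cvg; near=> z.
apply/esym/eq_div_normr; last by near: z.
by near: z; exact: cvgr_neq0 ul l0.
Unshelve. all: by end_near.
Qed.

End norm_eq_div_limits.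

Theorem theorem3 (d : measure_display) (T : measurableType d) (R : realType)
  (P : probability T R) (xbar : R) (X : T -> R) (Yf : R -> T -> R)
  (CE : (T -> R) -> R -> R) (fX : R -> R) (eps1 eps2 eps3 eps : R) :
  let Y := fun w => Yf (X w) w in
  let g := CE Y in
  let h := CE (Yf xbar) in
  let ATT := fun x => CE (Yf x \- Yf xbar) x in
  let m := fun x => g x - lim (g z @[z --> xbar^'+]) in
  let s := fun x => h x - lim (h z @[z --> xbar^'+]) in
  let I := [set x | xbar < x < xbar + eps] in
  let G := cond_cdf P (s \o X) (X @^-1` I) in
  (* setting *)
  measurable_fun setT X ->
  P [set w | X w < xbar] = 0%E ->
  (0 < P (X @^-1` [set xbar]))%E ->
  P.-integrable setT (EFin \o Y) ->
  P.-integrable setT (EFin \o Yf xbar) ->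
  (forall x, xbar <= x -> P.-integrable setT (EFin \o (Yf x \- Yf xbar))) ->
  fixed_cond_exp P X CE ->
  (* A1 (i) *)
  0 < eps1 ->
  (forall x, xbar < x < xbar + eps1 ->
     is_derive x 1 (fun v => fine (P [set w | X w <= v])) (fX x) /\ {for x, continuous fX}) ->
  cvg (fX z @[z --> xbar^'+]) ->
  0 < lim (fX z @[z --> xbar^'+]) ->
  (* A1 (ii) *)
  0 < eps2 ->
  (forall x, xbar < x < xbar + eps2 -> derivable g x 1) ->
  cvg (g z @[z --> xbar^'+]) ->
  cvg (derive1 g z @[z --> xbar^'+]) ->
  (* A1 (iii) *)
  0 < eps3 ->
  (forall x, xbar < x < xbar + eps3 -> derivable h x 1) ->
  cvg (derive1 h z @[z --> xbar^'+]) ->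
  lim (derive1 h z @[z --> xbar^'+]) != 0 ->
  (* A1 (iv) *)
  ATT z @[z --> xbar^'+] --> 0 ->
  cvg (rquot ATT xbar z @[z --> xbar^'+]) ->
  (* conclusion of Theorem 2 on I = (xbar, xbar + eps) *)
  0 < eps ->
  (forall x, I x -> derivable s x 1) ->
  ((forall x y, I x -> I y -> x < y -> s x < s y) \/
   (forall x y, I x -> I y -> x < y -> s y < s x)) ->
  (forall x, I x ->
     derivable G (s x) 1 /\ derive1 G (s x) != 0 /\
     `|derive1 s x| = (fX x / fine (P (X @^-1` I))) / derive1 G (s x)) ->
  (* conclusion *)
  exists L : R,
    L != 0 /\
    derive1 G (s z) @[z --> xbar^'+] --> L /\
    cvg (rquot m xbar z @[z --> xbar^'+]) /\
    cvg (rquot s xbar z @[z --> xbar^'+]) /\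
    ATT z / (z - xbar) @[z --> xbar^'+] -->
      lim (rquot m xbar z @[z --> xbar^'+])
      - sgn (lim (rquot s xbar z @[z --> xbar^'+]))
        * ((lim (fX z @[z --> xbar^'+]) / fine (P (X @^-1` I))) / L).
Proof.
move=> Y g h ATT m s I G _ _ _ iY iY0 iD CEX _ _ cfX fX0 e2 dg cg cdg e3 dh cdh dh0
  ATT0 _ e0 _ _ HI.
set lg := lim (g z @[z --> xbar^'+]).
set l := lim (derive1 h z @[z --> xbar^'+]).
set lm := lim (derive1 g z @[z --> xbar^'+]).
set c := fine (P (X @^-1` I)).
set fl := lim (fX z @[z --> xbar^'+]).
have ATT_gh x : xbar < x -> ATT x = g x - h x.
  move=> xx; apply: (@fixed_cond_exp_subr_on _ _ _ P X CE _ Y (Yf xbar)) => //.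
    exact/iD/ltW.
  by rewrite /Y => w ->.
have h_cvg : h z @[z --> xbar^'+] --> lg.
  have : (g z - ATT z) @[z --> xbar^'+] --> lg - 0 by exact: cvgB.
  rewrite subr0; apply: cvg_trans; apply: near_eq_cvg; near=> z.
  rewrite ATT_gh; first by rewrite opprB addrC subrK.
  by near: z; exact: nbhs_right_gt.
have rquot_m : rquot m xbar = rquot g xbar := rquot_subr_lim cg.
have rquot_s : rquot s xbar = rquot h xbar := rquot_subr_lim (cvgP _ h_cvg).
have rquot_m_cvg : rquot m xbar z @[z --> xbar^'+] --> lm.
  by rewrite rquot_m; exact: cvg_rquot_derive1 e2 dg cg cdg.
have rquot_s_cvg : rquot s xbar z @[z --> xbar^'+] --> l.
  by rewrite rquot_s; exact: cvg_rquot_derive1 e3 dh (cvgP _ h_cvg) cdh.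
have ds_cvg : derive1 s z @[z --> xbar^'+] --> l.
  have -> : derive1 s = derive1 h := derive1_subr_cst.
  exact: cdh.
have near_I : \forall z \near xbar^'+, I z.
  near=> z; apply/andP; split; near: z; first exact: nbhs_right_gt.
  by apply: nbhs_right_lt; rewrite ltrDl.
have ds_norm : \forall z \near xbar^'+, `|derive1 s z| = fX z / c / derive1 G (s z).
  by apply: filterS near_I => z /HI [_ []].
have c0 : c != 0 by exact: near_norm_eq_div_neq0 ds_cvg dh0 ds_norm.
have flc0 : fl / c != 0 by rewrite mulf_neq0 ?invr_eq0 // lt0r_neq0.
exists (fl / c / `|l|); split; first by rewrite mulf_neq0 ?invr_eq0 ?normr_eq0.
split; first exact: cvg_norm_eq_div ds_cvg dh0 ds_norm cfX.
split; first exact: cvgP rquot_m_cvg.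
split; first exact: cvgP rquot_s_cvg.
rewrite (cvg_lim _ rquot_m_cvg) // (cvg_lim _ rquot_s_cvg) // divKf // sgn_mul_norm.
apply: cvg_trans (cvgB rquot_m_cvg rquot_s_cvg); apply: near_eq_cvg; near=> z.
have xz : xbar < z by near: z; exact: nbhs_right_gt.
change (rquot m xbar z - rquot s xbar z = ATT z / (z - xbar)).
rewrite rquot_m rquot_s /rquot (cvg_lim _ h_cvg) // -mulrBl ATT_gh //.
by rewrite opprB addrA subrK.
Unshelve. all: by end_near.
Qed.
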